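(* Consider $n$ agents with responsibilities $(b_1,\ldots,b_n)$ and $m$ chores $e_1,\ldots,e_m$. Let $A=(A_1,\ldots,A_n)$ be any allocation, and let $\pi$ be the associated picking sequence in which agent $i$ picks exactly in those rounds $r$ with $e_{m-r+1}\in A_i$. Let $\rho_i(A)$ be the supremum of $c_i(A_i)/APS_i$ over all additive disvaluations $c_i$ with $c_i(e_j)\ge c_i(e_k)$ for all $j<k$. Let $\rho_i(\pi)$ be the supremum, over all additive disvaluations $c_i$ and all disvaluations and picking strategies of the other agents, of $c_i(B_i)/APS_i$, where $B_i$ is the bundle received by agent $i$ following the greedy picking strategy in $\pi$. Then $\rho_i(A)=\rho_i(\pi)$. The same equality holds with $APS_i$ replaced by $CS_i$, and, when all responsibilities equal $1/n$, with $APS_i$ replaced by $MMS_i$.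
   Context: Picking sequence: in round $r$ agent $\pi_r$ takes one remaining chore. Greedy: take remaining chore of smallest own disvalue. $APS_i=\max_p\min\{c_i(S):\sum_{e\in S}p_e\ge b_i\}$ over nonnegative price vectors summing to $1$. $CS_i=\max\{b_ic_i(\mathcal M),d_1,d_k+d_{k+1}\}$, $k=\lfloor 1/b_i\rfloor$, $d_1\ge d_2\ge\cdots$ the disvalues under $c_i$ sorted non-increasingly (padded with zeros). $MMS_i=\min_{(A_1,\ldots,A_n)}\max_jc_i(A_j)$ over partitions of the chores into $n$ bundles. *)

From HB Require Import structures.
From mathcomp Require Import all_boot all_order all_algebra.
From mathcomp Require Import all_classical all_reals.
From mathcomp Require Import ereal.
Set Implicit Arguments. Unset Strict Implicit. Unset Printing Implicit Defensive.
Import Order.TTheory GRing.Theory Num.Theory.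
Local Open Scope classical_set_scope.
Local Open Scope ring_scope.

(* Agents are 'I_n, chores are 'I_m; chore index j : 'I_m stands for e_{j+1}.
   A disvaluation c : 'I_m -> R is additive: c(S) = \sum_(j in S) c j. *)

Section Fair.
Variable R : realType.

Definition cost m (c : 'I_m -> R) (S : {set 'I_m}) : R := \sum_(j in S) c j.

Definition disval m (c : 'I_m -> R) : Prop := forall j, 0 <= c j.

Definition APS n m (b : 'I_n -> R) (i : 'I_n) (c : 'I_m -> R) : R :=
  sup [set inf [set cost c S | S in [set S : {set 'I_m} | b i <= \sum_(j in S) p j]]
      | p in [set p : 'I_m -> R | (forall j, 0 <= p j) /\ \sum_j p j = 1]].

(* d_1 >= d_2 >= ... : disvalues sorted non-increasingly, padded with zeros;
   d t (t >= 1) is d_t. *)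
Definition dsorted m (c : 'I_m -> R) : seq R :=
  sort (fun x y : R => y <= x) [seq c j | j <- enum 'I_m].
Definition dval m (c : 'I_m -> R) (t : nat) : R := nth 0 (dsorted c) t.-1.

Definition CS n m (b : 'I_n -> R) (i : 'I_n) (c : 'I_m -> R) : R :=
  let k := Num.truncn (b i)^-1 in
  Num.max (b i * \sum_j c j) (Num.max (dval c 1) (dval c k + dval c k.+1)).

(* Maximin share: min over partitions (A_1..A_n) of the chores into n bundles
   (a partition = an assignment f of chores to bundle indices) of max_j c(A_j). *)
Definition MMS n m (c : 'I_m -> R) : R :=
  inf [set \big[Num.max/0]_(k < n) cost c [set j | f j == k]
      | f in [set: {ffun 'I_m -> 'I_n}]].

(* An allocation A assigns each chore to exactly one agent; A_i = bundle A i. *)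
Definition bundle n m (A : 'I_m -> 'I_n) (i : 'I_n) : {set 'I_m} :=
  [set j | A j == i].

Definition pick_seq n m (A : 'I_m -> 'I_n) : seq 'I_n :=
  [seq A j | j <- rev (enum 'I_m)].

(* A (deterministic) picking strategy maps the history of chores picked so
   far (in order) to the chore to pick. [run] plays the picking sequence. *)
Definition run n m (pi : seq 'I_n) (sigma : 'I_n -> seq 'I_m -> 'I_m) : seq 'I_m :=
  seq.foldl (fun h k => rcons h (sigma k h)) [::] pi.

(* the run is legal: every pick is a remaining chore *)
Definition legal n m (pi : seq 'I_n) (sigma : 'I_n -> seq 'I_m -> 'I_m) : Prop :=
  uniq (run pi sigma).

Definition received n m (pi : seq 'I_n) (sigma : 'I_n -> seq 'I_m -> 'I_m)
  (i : 'I_n) : {set 'I_m} :=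
  finset (fun x : 'I_m =>
    x \in map snd (seq.filter (fun p : 'I_n * 'I_m => p.1 == i) (zip pi (run pi sigma)))).

Definition greedy m (c : 'I_m -> R) (s : seq 'I_m -> 'I_m) : Prop :=
  forall h : seq 'I_m, (exists y, y \notin h) ->
    s h \notin h /\ forall y, y \notin h -> c (s h) <= c y.

Definition rhoA n m (share : ('I_m -> R) -> R) (A : 'I_m -> 'I_n) (i : 'I_n)
  : \bar R :=
  ereal_sup [set ((cost c (bundle A i) / share c)%:E)
            | c in [set c : 'I_m -> R | disval c /\ 0 < share c /\
                     (forall j k : 'I_m, (j < k)%N -> c k <= c j)]].

Definition rhoPi n m (share : ('I_m -> R) -> R) (pi : seq 'I_n) (i : 'I_n)
  : \bar R :=
  ereal_sup [set x | exists (c : 'I_m -> R) (cs : 'I_n -> 'I_m -> R)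
                            (sigma : 'I_n -> seq 'I_m -> 'I_m),
     [/\ disval c /\ 0 < share c, cs i = c /\ (forall k, disval (cs k)),
         greedy c (sigma i), legal pi sigma &
         x = (cost c (received pi sigma i) / share c)%:E]].

End Fair.

From HB Require Import structures.
From mathcomp Require Import all_boot all_order all_algebra.
From mathcomp Require Import all_classical all_reals.
From mathcomp Require Import ereal.
From mathcomp Require Import fingroup perm zify.
Set Implicit Arguments. Unset Strict Implicit. Unset Printing Implicit Defensive.
Import Order.TTheory GRing.Theory Num.Theory.
Local Open Scope ring_scope.

(* If [c] is nonincreasing in the chore index and every agent always takes the
   remaining chore of highest index, the run of [pick_seq A] hands out
   e_m, e_(m-1), ..., e_1 in turn: agent i is greedy and receives exactly A_i,
   so rho_i(A) <= rho_i(pi).  Conversely, let [s] be a relabelling of the chores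
   making [c \o s] nonincreasing.  When agent i picks in round r, only r - 1
   chores are gone, so one of the m - r + 1 chores
   s(e_(m-r+1)), ..., s(e_m) is left; each costs at most (c \o s)(e_(m-r+1)), hence
   so does the greedy pick; summing over the rounds of i gives
   c(B_i) <= (c \o s)(A_i).  APS, CS and MMS are invariant under relabelling,
   so [c \o s] is admissible for rho_i(A) with the same share. *)

Section Run.
Variables (n m : nat) (sigma : 'I_n -> seq 'I_m -> 'I_m).

Lemma run_rcons pi k :
  run (rcons pi k) sigma = rcons (run pi sigma) (sigma k (run pi sigma)).
Proof. by rewrite /run foldl_rcons. Qed.

Lemma size_run pi : size (run pi sigma) = size pi.
Proof. by elim/last_ind: pi => // pi k IH; rewrite run_rcons !size_rcons IH. Qed.

Lemma take_run r pi : take r (run pi sigma) = run (take r pi) sigma.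
Proof.
elim/last_ind: pi r => [|pi k IH] r; first by case: r.
rewrite run_rcons -!cats1 !take_cat size_run.
case: ltnP => // _; case: (r - size pi)%N => [|t] /=; first by rewrite !cats0.
by rewrite !cats1 run_rcons.
Qed.

Lemma nth_run x0 i0 r pi : (r < size pi)%N ->
  nth x0 (run pi sigma) r = sigma (nth i0 pi r) (take r (run pi sigma)).
Proof.
move=> lt_r_pi; rewrite take_run.
have := take_run r.+1 pi; rewrite (take_nth i0 lt_r_pi) run_rcons.
by rewrite (take_nth x0) ?size_run // => /rcons_inj[_ ->].
Qed.
End Run.

Section Greedy.
Variables (R : realType) (m : nat) (c : 'I_m -> R).

Lemma exists_nonincreasing_perm :
  exists s : {perm 'I_m}, forall j k : 'I_m, (j <= k)%N -> c (s k) <= c (s j).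
Proof.
case: m c => [|m'] c'; first by exists 1%g => -[].
pose geq_c := fun x y : 'I_m'.+1 => c' y <= c' x.
have geq_c_total : total geq_c by move=> x y; apply: le_total.
have geq_c_trans : transitive geq_c by move=> x y z /[swap]; apply: le_trans.
pose l := sort geq_c (enum 'I_m'.+1).
have size_l : size l = m'.+1 by rewrite size_sort size_enum_ord.
have nth_l_inj : injective (fun j : 'I_m'.+1 => nth ord0 l j).
  move=> j k /eqP; rewrite nth_uniq ?size_l ?sort_uniq ?enum_uniq //.
  by move/eqP/val_inj.
exists (perm nth_l_inj) => j k le_jk; rewrite !permE.
apply: (sorted_leq_nth geq_c_trans _ ord0 (sort_sorted geq_c_total _)) => //.
- by move=> x; exact: lexx.
- by rewrite unfold_in /= size_l.
- by rewrite unfold_in /= size_l.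
Qed.

Variables (s : {perm 'I_m}) (g : seq 'I_m -> 'I_m).
Hypothesis s_sorts_c : forall j k : 'I_m, (j <= k)%N -> c (s k) <= c (s j).
Hypothesis g_greedy : greedy c g.

(* Pigeonhole: [h] cannot contain all of the [m - k] chores [s k, ..., s (m-1)]. *)
Lemma greedy_le_sorted (h : seq 'I_m) (k : 'I_m) :
  (size h + k).+1 = m -> c (g h) <= c (s k).
Proof.
move=> size_h.
have /allPn[_ /mapP[j j_ge_k ->] sj_free] : ~~ all (mem h) (map s (drop k (enum 'I_m))).
  apply/negP => /allP/uniq_leq_size; rewrite map_inj_uniq ?drop_uniq ?enum_uniq //;
    last exact: perm_inj.
  rewrite size_map size_drop size_enum_ord => /(_ isT).
  by rewrite leqNgt ltn_subRL addnC size_h leqnn.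
have le_kj : (k <= j)%N.
  move: j_ge_k => /(map_f val); rewrite map_drop val_enum_ord drop_iota mem_iota.
  by case/andP.
have [_ g_min] := g_greedy (ex_intro _ (s j) sj_free).
exact: le_trans (g_min _ sj_free) (s_sorts_c le_kj).
Qed.
End Greedy.

Section PermutationInvariance.
Variables (R : realType) (m : nat).
Implicit Types (c : 'I_m -> R) (s : {perm 'I_m}).

Lemma cost_comp_perm c s : cost (c \o s) = cost c \o (fun S : {set 'I_m} => s @: S).
Proof.
by apply/funext => S; rewrite /cost /= big_imset //; apply: in2W perm_inj.
Qed.

Lemma range_imset_perm s : range (fun S : {set 'I_m} => s @: S) = [set: {set 'I_m}]%classic.
Proof.
apply/seteqP; split=> // T _; exists ((s^-1)%g @: T) => //=.
by rewrite -imset_comp (eq_imset _ (permKV s)) imset_id.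
Qed.

Lemma comp_permK c s : c \o (s^-1)%g \o s = c.
Proof. by apply/funext => j; rewrite /= permK. Qed.

Lemma comp_permKV c s : c \o s \o (s^-1)%g = c.
Proof. by apply/funext => j; rewrite /= permKV. Qed.

Lemma perm_invariant_set (T : Type) (X : ('I_m -> R) -> set T) :
  (forall c s, (X (c \o s) `<=` X c)%classic) -> forall c s, X (c \o s) = X c.
Proof.
move=> X_sub c s; apply/seteqP; split; first exact: X_sub.
by have := X_sub (c \o s) (s^-1)%g; rewrite comp_permKV.
Qed.

Lemma perm_eq_map_perm_enum s : perm_eq [seq s j | j <- enum 'I_m] (enum 'I_m).
Proof.
apply: uniq_perm; rewrite ?enum_uniq ?(map_inj_uniq (@perm_inj _ s)) ?enum_uniq //.
move=> j; rewrite mem_enum; apply/mapP; exists ((s^-1)%g j); by rewrite ?mem_enum ?permKV.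
Qed.
End PermutationInvariance.

Section Shares.
Variables (R : realType) (n m : nat) (b : 'I_n -> R) (i : 'I_n).
Implicit Types (c : 'I_m -> R) (s : {perm 'I_m}).

Lemma APS_comp_perm c s : APS b i (c \o s) = APS b i c.
Proof.
pose prices := [set p : 'I_m -> R | (forall j, 0 <= p j) /\ \sum_j p j = 1]%classic.
pose V (c p : 'I_m -> R) :=
  [set cost c S | S in [set S : {set 'I_m} | b i <= cost p S]]%classic.
have V_comp_perm c' p s' : V (c' \o s') (p \o s') = V c' p.
  rewrite /V !cost_comp_perm -(@image_comp _ _ _ (fun S : {set 'I_m} => s' @: S)).
  by rewrite (image_preimage [set S | b i <= cost p S]%classic (range_imset_perm s')).
pose X c' := [set inf (V c' p) | p in prices]%classic.
suff X_sub c' s' : (X (c' \o s') `<=` X c')%classic.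
  exact: (f_equal sup (perm_invariant_set X_sub c s)).
move=> _ [p [p_ge0 p_sum1] <-]; exists (p \o (s'^-1)%g).
  split=> [j|]; first exact: p_ge0.
  by rewrite -p_sum1 (reindex_inj (@perm_inj _ s')) /=; under eq_bigr do rewrite permK.
by rewrite -(V_comp_perm c' _ s') comp_permK.
Qed.

Lemma dsorted_comp_perm c s : dsorted (c \o s) = dsorted c.
Proof.
apply/perm_sortP.
- by move=> x y; apply: le_total.
- by move=> x y z /[swap]; apply: le_trans.
- by move=> x y /andP[le_yx le_xy]; apply/le_anti/andP.
by rewrite (map_comp c s) perm_map // perm_eq_map_perm_enum.
Qed.

Lemma CS_comp_perm c s : CS b i (c \o s) = CS b i c.
Proof.
by rewrite /CS /dval dsorted_comp_perm [in RHS](reindex_inj (@perm_inj _ s)).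
Qed.

Lemma MMS_comp_perm c s : MMS n (c \o s) = MMS n c.
Proof.
pose X c' := [set \big[Num.max/0]_(k < n) cost c' [set j | f j == k]
              | f in [set: {ffun 'I_m -> 'I_n}]]%classic.
suff X_sub c' s' : (X (c' \o s') `<=` X c')%classic.
  exact: (f_equal inf (perm_invariant_set X_sub c s)).
move=> _ [f _ <-]; exists [ffun j => f ((s'^-1)%g j)] => //.
apply: eq_bigr => k _; rewrite cost_comp_perm /= (can_imset_pre _ (permK s')).
by congr cost; apply/setP => j; rewrite !inE ffunE.
Qed.

Lemma APS_gt0 c : 0 < APS b i c -> (0 < m)%N.
Proof.
case: m c => // c; rewrite /APS (_ : [set _ | p in _]%classic = set0) ?sup0 ?ltxx //.
by apply/seteqP; split=> // x [p [_]]; rewrite big_ord0 => /esym/eqP; rewrite oner_eq0.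
Qed.

Lemma CS_gt0 c : 0 < CS b i c -> (0 < m)%N.
Proof.
case: m c => // c; rewrite /CS /dval /dsorted big_ord0 mulr0.
by rewrite (size0nil (size_enum_ord 0)) !nth_nil addr0 !maxxx ltxx.
Qed.

Lemma MMS_gt0 c : 0 < MMS n c -> (0 < m)%N.
Proof.
case: m c => // c.
rewrite /MMS (_ : [set _ | f in _]%classic = [set 0]%classic) ?inf1 ?ltxx //.
have bundles_eq0 (f : {ffun 'I_0 -> 'I_n}) :
    \big[Num.max/0]_(k < n) cost c [set j | f j == k] = 0.
  by apply: bigmax_eq_id => k _; rewrite /cost big1 // => -[].
apply/seteqP; split=> [_ [f _ <-] | _ ->] /=; first exact: bundles_eq0.
by exists [ffun=> i].
Qed.
End Shares.

Section LastFree.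
Variables (R : realType) (m : nat) (x0 : 'I_m).

(* [x0] is only returned when [h] exhausts the chores. *)
Definition last_free (h : seq 'I_m) : 'I_m :=
  if [pick j | j \notin h] is Some j0 then [arg max_(j > j0 | j \notin h) val j]
  else x0.

Lemma last_freeP (h : seq 'I_m) (j : 'I_m) : j \notin h ->
  last_free h \notin h /\ forall k, k \notin h -> (k <= last_free h)%N.
Proof.
move=> j_free; rewrite /last_free.
case: pickP => [j0 j0_free | /(_ j)]; last by rewrite j_free.
by case: arg_maxnP.
Qed.

Lemma last_free_greedy (c : 'I_m -> R) :
  (forall j k : 'I_m, (j < k)%N -> c k <= c j) -> greedy c last_free.
Proof.
move=> c_nonincr h [j /last_freeP[free_last last_max]]; split=> // k k_free.
have := last_max k k_free; rewrite leq_eqVlt => /orP[/eqP/val_inj -> // | ].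
exact: c_nonincr.
Qed.

Lemma mem_take_rev_enum r (j : 'I_m) : (r <= m)%N ->
  (j \in take r (rev (enum 'I_m))) = (m - r <= j)%N.
Proof.
move=> le_rm; rewrite -(mem_map val_inj) map_take map_rev val_enum_ord take_rev.
by rewrite size_iota mem_rev drop_iota mem_iota add0n subKn // subnK // ltn_ord andbT.
Qed.

Lemma last_free_take_rev_enum r : (r < m)%N ->
  last_free (take r (rev (enum 'I_m))) = nth x0 (rev (enum 'I_m)) r.
Proof.
move=> lt_rm; apply: val_inj => /=.
rewrite nth_rev ?size_enum_ord // nth_enum_ord; last by lia.
have k_lt_m : (m - r.+1 < m)%N by lia.
have k_free : Ordinal k_lt_m \notin take r (rev (enum 'I_m)).
  by rewrite mem_take_rev_enum ?(ltnW lt_rm) //= -ltnNge; lia.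
have [] := last_freeP k_free; move: (last_free _) => l.
by rewrite mem_take_rev_enum ?(ltnW lt_rm) // -ltnNge => lt_l /(_ _ k_free) /=; lia.
Qed.

Lemma run_last_free (n : nat) (pi : seq 'I_n) : (size pi <= m)%N ->
  run pi (fun=> last_free) = take (size pi) (rev (enum 'I_m)).
Proof.
elim/last_ind: pi => [|pi k IH]; first by rewrite take0.
rewrite size_rcons => lt_pi_m; rewrite run_rcons IH ?(ltnW lt_pi_m) //.
by rewrite last_free_take_rev_enum // -take_nth // size_rev size_enum_ord.
Qed.
End LastFree.

Section PickSeq.
Variables (n m : nat) (A : 'I_m -> 'I_n).

Lemma size_pick_seq : size (pick_seq A) = m.
Proof. by rewrite size_map size_rev size_enum_ord. Qed.

Lemma nth_rev_enum x0 (r : 'I_m) : nth x0 (rev (enum 'I_m)) r = rev_ord r.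
Proof. by apply: val_inj; rewrite nth_rev ?size_enum_ord //= nth_enum_ord ?rev_ord_proof. Qed.

Lemma nth_pick_seq i0 (r : 'I_m) : nth i0 (pick_seq A) r = A (rev_ord r).
Proof. by rewrite (nth_map r) ?size_rev ?size_enum_ord // nth_rev_enum. Qed.
End PickSeq.

Section Received.
Variables (R : realType) (n m : nat) (c : 'I_m -> R).

Lemma cost_received (pi : seq 'I_n) sigma i i0 x0 : legal pi sigma ->
  cost c (received pi sigma i) =
  \sum_(r < size pi | nth i0 pi r == i) c (nth x0 (run pi sigma) r).
Proof.
move=> run_uniq; have size_run_pi := esym (size_run sigma pi).
pose L := [seq p.2 | p <- zip pi (run pi sigma) & p.1 == i].
have L_uniq : uniq L.
  apply: subseq_uniq run_uniq; rewrite -(@unzip2_zip _ _ pi (run pi sigma)) ?size_run_pi //.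
  exact/map_subseq/filter_subseq.
rewrite /cost (eq_bigl (mem L)) => [|x]; last by rewrite inE.
rewrite -big_uniq // big_map big_filter (big_nth (i0, x0)) size_zip size_run_pi minnn.
by rewrite big_mkord; apply: eq_big => [r|r _]; rewrite nth_zip.
Qed.

Lemma cost_bundle_rev (A : 'I_m -> 'I_n) i :
  cost c (bundle A i) = \sum_(r < m | A (rev_ord r) == i) c (rev_ord r).
Proof. by rewrite /cost (reindex_inj rev_ord_inj); apply: eq_bigl => r; rewrite inE. Qed.
End Received.

Section PickingSequence.
Variables (R : realType) (n m : nat) (share : ('I_m -> R) -> R).
Hypothesis share_comp_perm : forall c (s : {perm 'I_m}), share (c \o s) = share c.
Hypothesis share_gt0 : forall c, 0 < share c -> (0 < m)%N.
Variables (A : 'I_m -> 'I_n) (i : 'I_n).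

Lemma rhoA_le_rhoPi : (rhoA share A i <= rhoPi share (pick_seq A) i)%E.
Proof.
apply: ereal_sup_le => _ [c [c_ge0 [share_c_gt0 c_nonincr]] <-].
pose x0 := Ordinal (share_gt0 share_c_gt0); pose sigma := fun _ : 'I_n => last_free x0.
have run_sigma : run (pick_seq A) sigma = rev (enum 'I_m).
  by rewrite run_last_free size_pick_seq ?take_oversize // size_rev size_enum_ord.
have legal_sigma : legal (pick_seq A) sigma by rewrite /legal run_sigma rev_uniq enum_uniq.
exists c, (fun=> c), sigma; split=> //; first exact: last_free_greedy.
rewrite (cost_received _ _ i x0 legal_sigma) cost_bundle_rev size_pick_seq.
by congr ((_ / _)%:E); apply: eq_big => r; rewrite ?nth_pick_seq // run_sigma nth_rev_enum.
Qed.

Lemma rhoPi_le_rhoA : (rhoPi share (pick_seq A) i <= rhoA share A i)%E.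
Proof.
apply: ge_ereal_sup => _ [c [cs [sigma [[c_ge0 share_c_gt0] _ greedy_c legal_sigma ->]]]].
pose x0 := Ordinal (share_gt0 share_c_gt0).
have [s s_sorts_c] := exists_nonincreasing_perm c.
apply: (@le_trans _ _ ((cost (c \o s) (bundle A i) / share (c \o s))%:E)); last first.
  apply: ereal_sup_ubound; exists (c \o s) => //; split=> [j|]; first exact: c_ge0.
  by rewrite share_comp_perm; split=> // j k /ltnW; apply: s_sorts_c.
rewrite share_comp_perm lee_fin ler_pM2r ?invr_gt0 //.
rewrite (cost_received _ _ i x0 legal_sigma) cost_bundle_rev size_pick_seq.
under eq_bigl do rewrite nth_pick_seq.
apply: ler_sum => r /eqP A_r; rewrite (nth_run _ x0 i) ?size_pick_seq //.
rewrite nth_pick_seq A_r; apply: greedy_le_sorted s_sorts_c greedy_c _ _ _.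
by rewrite size_takel ?size_run ?size_pick_seq 1?ltnW //= -addSn subnKC.
Qed.

Lemma rhoA_eq_rhoPi : rhoA share A i = rhoPi share (pick_seq A) i.
Proof. by apply/le_anti/andP; split; [exact: rhoA_le_rhoPi | exact: rhoPi_le_rhoA]. Qed.
End PickingSequence.

Theorem corollary3 (R : realType) (n m : nat) (b : 'I_n -> R)
  (A : 'I_m -> 'I_n) (i : 'I_n) :
  (forall k, 0 < b k) -> \sum_k b k = 1 ->
  [/\ rhoA (@APS R n m b i) A i = rhoPi (@APS R n m b i) (pick_seq A) i,
      rhoA (@CS R n m b i) A i = rhoPi (@CS R n m b i) (pick_seq A) i &
      ((forall k, b k = n%:R^-1) ->
       rhoA (@MMS R n m) A i = rhoPi (@MMS R n m) (pick_seq A) i)].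
Proof.
move=> _ _; split=> [| | _]; apply: rhoA_eq_rhoPi.
- exact: APS_comp_perm.
- exact: APS_gt0.
- exact: CS_comp_perm.
- exact: CS_gt0.
- exact: MMS_comp_perm.
- exact: MMS_gt0.
Qed.
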